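(* Let $C=(Q,\Sigma,\Psi)$ be a HMM over a finite profile language $\Gamma=\{\beta_1,\dots,\beta_K\}$ with labelling reduction $L=(Q,\hat\Sigma,\hat M)$. Then for any initial distributions $\pi_1,\pi_2$, $\pi_1\equiv_L\pi_2$ implies $\pi_1\equiv_C\pi_2$.
   Context: Let $(\Sigma,\mathscr{G},\lambda)$ be a measure space where $\Sigma$ is a topological space and every open subset belongs to $\mathscr{G}$ and has positive measure. A HMM is $(Q,\Sigma,\Psi)$ with $Q$ finite and $\Psi:\Sigma\to[0,\infty)^{|Q|\times|Q|}$ piecewise continuous (continuous on an open set $C'$ such that every point outside $C'$ is a limit of points $x_n\in C'$ with $\Psi(x_n)$ converging to its value) with $\int_\Sigma\Psi\,d\lambda$ stochastic. For an initial distribution $\pi$, $\mathbb{P}_\pi$ is the unique probability measure on $\Sigma^\omega$ with $\mathbb{P}_\pi(A\Sigma^\omega)=\pi\left(\int_A\Psi\,d\lambda^n\right)\mathbbm{1}^T$ for all cylinder sets $A=A_1\times\dots\times A_n\subseteq\Sigma^n$, where $\Psi(x_1\cdots x_n)=\Psi(x_1)\cdots\Psi(x_n)$ and $\lambda^n$ is the product measure; $\pi_1\equiv_C\pi_2$ means $\mathbb{P}_{\pi_1}=\mathbb{P}_{\pi_2}$. For a finite observation set with counting measure, $\Psi$ is just a family of matrices $\Psi(a)$ with $\sum_a\Psi(a)$ stochastic. Profiles $\gamma$ encode functions $[\![\gamma]\!]:\Sigma\to[0,\infty)$. $C$ is over $\Gamma$ if $\Psi$ is given as a matrix whose entries are $0$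 or pairs $(p_{i,j},\gamma_{i,j})\in\mathbb{Q}_+\times\Gamma$ with $\Psi_{i,j}=p_{i,j}[\![\gamma_{i,j}]\!]$ and $\int_\Sigma[\![\gamma_{i,j}]\!]d\lambda=1$. The labelling reduction is the finite-observation HMM $(Q,\hat\Sigma,\hat M)$ with $\hat\Sigma=\{a_1,\dots,a_K\}$ fresh letters and $\hat M_{i,j}(a_k)=p_{i,j}$ if $\gamma_{i,j}=\beta_k$ and $0$ otherwise. *)

From HB Require Import structures.
From mathcomp Require Import all_boot all_order all_algebra.
From mathcomp Require Import all_classical all_reals all_analysis.
Set Implicit Arguments. Unset Strict Implicit. Unset Printing Implicit Defensive.
Import Order.TTheory GRing.Theory Num.Theory.
Import numFieldNormedType.Exports.
Local Open Scope classical_set_scope.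
Local Open Scope ring_scope.

Definition is_topology (T : Type) (op : set (set T)) : Prop :=
  [/\ op setT, op set0,
      (forall U V, op U -> op V -> op (U `&` V)) &
      (forall F : set (set T), F `<=` op -> op (\bigcup_(U in F) U))].

Definition standing (R : realType) (d : measure_display) (T : measurableType d)
  (op : set (set T)) (lam : {measure set T -> \bar R}) : Prop :=
  forall U, op U -> measurable U /\ (U !=set0 -> (0 < lam U)%E).

Definition seq_conv (T : Type) (op : set (set T)) (u : nat -> T) (x : T) : Prop :=
  forall U, op U -> U x -> exists N, forall m, (N <= m)%N -> U (u m).

Definition cont_within (R : realType) (T : Type) (op : set (set T))
  (C : set T) (f : T -> R) (x : T) : Prop :=
  forall e : R, 0 < e -> exists U, [/\ op U, U x &
     forall y, U y -> C y -> `|f y - f x| < e].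

Definition piecewise_continuous (R : realType) (T : Type) (op : set (set T))
  (n : nat) (Psi : T -> 'M[R]_n) : Prop :=
  exists C : set T, [/\ op C,
    (forall x, C x -> forall i j, cont_within op C (fun y => Psi y i j) x) &
    (forall x, ~ C x -> exists u : nat -> T,
        [/\ (forall m, C (u m)), seq_conv op u x &
            forall i j, (fun m => Psi (u m) i j) @ \oo --> Psi x i j])].

(* ---------- HMM over a finite profile language Gamma = {beta_k | k < K} ----------
   Q = 'I_n ; sem k = [[beta_k]] ; pat i j = None  (entry 0)
                                  or Some (p_ij, k) (entry (p_ij, beta_k)). *)
Definition Psi_of (R : realType) (T : Type) (n K : nat) (sem : 'I_K -> T -> R)
  (pat : 'I_n -> 'I_n -> option (rat * 'I_K)) (x : T) : 'M[R]_n :=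
  \matrix_(i, j) match pat i j with
                 | Some (p, k) => ratr p * sem k x
                 | None => 0
                 end.

Definition intPsi (R : realType) (d : measure_display) (T : measurableType d)
  (lam : {measure set T -> \bar R}) (n : nat) (Psi : T -> 'M[R]_n) (A : set T)
  : 'M[R]_n := \matrix_(i, j) Rintegral lam A (fun x => Psi x i j).

Definition stochastic (R : realType) (n : nat) (M : 'M[R]_n) : Prop :=
  (forall i j, 0 <= M i j) /\ (forall i, \sum_j M i j = 1).

Definition is_distr (R : realType) (n : nat) (pi : 'rV[R]_n) : Prop :=
  (forall i, 0 <= pi 0 i) /\ \sum_i pi 0 i = 1.

Definition ones (R : realType) (n : nat) : 'cV[R]_n := const_mx 1.

Definition HMM_over (R : realType) (d : measure_display) (T : measurableType d)
  (op : set (set T)) (lam : {measure set T -> \bar R}) (n K : nat)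
  (sem : 'I_K -> T -> R) (pat : 'I_n -> 'I_n -> option (rat * 'I_K)) : Prop :=
  [/\ (forall k x, 0 <= sem k x),
      (forall i j p k, pat i j = Some (p, k) ->
          [/\ 0 < p, measurable_fun setT (sem k) &
              (\int[lam]_x (sem k x)%:E = 1)%E]),
      piecewise_continuous op (Psi_of sem pat) &
      stochastic (intPsi lam (Psi_of sem pat) setT)].

(* P_pi(A_1 x ... x A_m Sigma^omega) = pi (int_{A} Psi d lam^m) 1^T, where for
   the rectangle A and Psi(x_1..x_m) = Psi(x_1)...Psi(x_m) the integral
   int_A Psi d lam^m equals int_{A_1} Psi d lam ... int_{A_m} Psi d lam. *)
Definition cyl_prob (R : realType) (d : measure_display) (T : measurableType d)
  (lam : {measure set T -> \bar R}) (n : nat) (Psi : T -> 'M[R]_n)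
  (pi : 'rV[R]_n) (As : seq (set T)) : 'M[R]_1 :=
  pi *m foldr (fun A M => intPsi lam Psi A *m M) 1%:M As *m ones R n.

(* pi1 ==_C pi2 : P_pi1 and P_pi2 agree on all (measurable) cylinder sets,
   which (by uniqueness of P_pi) is P_pi1 = P_pi2 *)
Definition equivC (R : realType) (d : measure_display) (T : measurableType d)
  (lam : {measure set T -> \bar R}) (n : nat) (Psi : T -> 'M[R]_n)
  (pi1 pi2 : 'rV[R]_n) : Prop :=
  forall As : seq (set T), (forall A, A \in As -> measurable A) ->
    cyl_prob lam Psi pi1 As = cyl_prob lam Psi pi2 As.

Definition Mhat (R : realType) (n K : nat)
  (pat : 'I_n -> 'I_n -> option (rat * 'I_K)) (a : 'I_K) : 'M[R]_n :=
  \matrix_(i, j) match pat i j with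
                 | Some (p, k) => if k == a then ratr p else 0
                 | None => 0
                 end.

(* finite observation HMM with counting measure: int_A M = sum_{a in A} M(a) *)
Definition fin_cyl_prob (R : realType) (n K : nat) (M : 'I_K -> 'M[R]_n)
  (pi : 'rV[R]_n) (As : seq {set 'I_K}) : 'M[R]_1 :=
  pi *m foldr (fun (A : {set 'I_K}) (N : 'M[R]_n) => (\sum_(a | a \in A) M a) *m N) 1%:M As *m ones R n.

Definition equivFin (R : realType) (n K : nat) (M : 'I_K -> 'M[R]_n)
  (pi1 pi2 : 'rV[R]_n) : Prop :=
  forall As : seq {set 'I_K}, fin_cyl_prob M pi1 As = fin_cyl_prob M pi2 As.

From HB Require Import structures.
From mathcomp Require Import all_boot all_order all_algebra.
From mathcomp Require Import all_classical all_reals all_analysis.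
From mathcomp Require Import measurable_realfun.
Set Implicit Arguments. Unset Strict Implicit. Unset Printing Implicit Defensive.
Import Order.TTheory GRing.Theory Num.Theory.
Local Open Scope classical_set_scope.
Local Open Scope ring_scope.

(** Every entry of [Psi] is [p_ij [[beta_k]]], so integrating [Psi] over a
    measurable set [A] gives the linear combination
    [sum_k (int_A [[beta_k]]) Mhat(a_k)] of the matrices of the labelling
    reduction.  A row vector [v] with [v Mhat(w) 1^T = 0] for every word [w]
    keeps this property after right multiplication by any such combination, so
    it annihilates every product of integrals [int_A1 Psi ... int_Am Psi]
    against [1^T]; apply this to [v = pi1 - pi2]. *)

Definition word_mx (R : pzRingType) (n : nat) (I : Type) (M : I -> 'M[R]_n)
  (s : seq I) : 'M[R]_n :=
  foldr (fun a N => M a *m N) 1%:M s.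

Section WordNull.
Variables (R : comPzRingType) (n : nat) (I : finType).
Variables (M : I -> 'M[R]_n) (u : 'cV[R]_n).

Definition word_null (v : 'rV[R]_n) : Prop :=
  forall s, v *m word_mx M s *m u = 0.

Lemma word_null_mulmx_span (v : 'rV[R]_n) (c : I -> R) :
  word_null v -> word_null (v *m \sum_a c a *: M a).
Proof.
move=> v_null s; rewrite mulmx_sumr !mulmx_suml big1 // => a _.
have := v_null (a :: s); rewrite /= !mulmxA => va_null.
by rewrite -scalemxAr -!scalemxAl va_null scaler0.
Qed.

Lemma word_null_span (J : eqType) (N : J -> 'M[R]_n) (s : seq J)
    (v : 'rV[R]_n) :
  word_null v ->
  {in s, forall j, exists c : I -> R, N j = \sum_a c a *: M a} ->
  v *m word_mx N s *m u = 0.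
Proof.
elim: s v => [|j s IHs] v v_null N_span; first exact: (v_null [::]).
have [c N_j] := N_span j (mem_head j s).
rewrite /= N_j mulmxA; apply: IHs; first exact: word_null_mulmx_span.
by move=> i i_s; apply: N_span; rewrite in_cons i_s orbT.
Qed.

End WordNull.

Lemma equivFin_word_null (R : realType) (n K : nat) (M : 'I_K -> 'M[R]_n)
    (pi1 pi2 : 'rV[R]_n) :
  equivFin M pi1 pi2 -> word_null M (ones R n) (pi1 - pi2).
Proof.
move=> eqM s; have := eqM [seq [set a]%SET | a <- s]; rewrite /fin_cyl_prob.
have -> : foldr (fun (A : {set 'I_K}) N => (\sum_(a | a \in A) M a) *m N) 1%:M
            [seq [set a]%SET | a <- s] = word_mx M s.
  by elim: s {eqM} => //= a s ->; rewrite big_set1.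
by rewrite !mulmxBl => ->; rewrite subrr.
Qed.

Lemma fine_EFinM (R : realType) (r : R) (x : \bar R) :
  fine (r%:E * x)%E = r * fine x.
Proof.
case: x => [e| |] /=; rewrite ?mulr0 //; [rewrite mulry | rewrite mulrNy].
all: by case: sgrP => _; rewrite ?mul0e ?mul1e ?mulN1e.
Qed.

Lemma ge0_RintegralZl (R : realType) (d : measure_display)
    (T : measurableType d) (mu : {measure set T -> \bar R}) (D : set T)
    (f : T -> R) (r : R) :
  measurable D -> measurable_fun D f -> (forall x, D x -> 0 <= f x) ->
  0 <= r -> \int[mu]_(x in D) (r * f x) = r * \int[mu]_(x in D) f x.
Proof.
move=> mD mf f_ge0 r_ge0; rewrite /Rintegral.
under eq_integral do rewrite EFinM.
rewrite ge0_integralZl_EFin //; last exact/measurable_EFinP.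
exact: fine_EFinM.
Qed.

Lemma intPsi_Psi_of (R : realType) (d : measure_display) (T : measurableType d)
    (lam : {measure set T -> \bar R}) (n K : nat) (sem : 'I_K -> T -> R)
    (pat : 'I_n -> 'I_n -> option (rat * 'I_K)) (A : set T) :
  measurable A -> (forall k x, 0 <= sem k x) ->
  (forall i j p k, pat i j = Some (p, k) ->
     0 <= p /\ measurable_fun setT (sem k)) ->
  intPsi lam (Psi_of sem pat) A
    = \sum_a Rintegral lam A (sem a) *: Mhat R pat a.
Proof.
move=> mA sem_ge0 pat_spec; apply/matrixP => i j; rewrite !mxE summxE.
under eq_Rintegral do rewrite mxE.
case pat_ij: (pat i j) => [[p k]|]; last first.
  by rewrite big1 ?Rintegral_cst ?mul0r // => a _; rewrite !mxE pat_ij mulr0.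
have [p_ge0 msem] := pat_spec _ _ _ _ pat_ij.
rewrite (bigD1 k) //= big1 ?addr0 => [|a ak]; last first.
  by rewrite !mxE pat_ij eq_sym (negbTE ak) mulr0.
rewrite !mxE pat_ij eqxx mulrC ge0_RintegralZl ?ler0q //.
exact: measurable_funS msem.
Qed.

Theorem proposition9 (R : realType) (d : measure_display) (T : measurableType d)
  (op : set (set T)) (lam : {measure set T -> \bar R}) (n K : nat)
  (sem : 'I_K -> T -> R) (pat : 'I_n -> 'I_n -> option (rat * 'I_K))
  (pi1 pi2 : 'rV[R]_n) :
  is_topology op -> standing op lam -> HMM_over op lam sem pat ->
  is_distr pi1 -> is_distr pi2 ->
  equivFin (Mhat R pat) pi1 pi2 ->
  equivC lam (Psi_of sem pat) pi1 pi2.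
Proof.
move=> _ _ [sem_ge0 pat_spec _ _] _ _ eqL As mAs.
have pat_ge0 i j p k : pat i j = Some (p, k) ->
    0 <= p /\ measurable_fun setT (sem k).
  by move=> /pat_spec[p_gt0 msem _]; split; [exact: ltW|].
apply/eqP; rewrite -subr_eq0 /cyl_prob -!mulmxBl; apply/eqP.
apply: (word_null_span (N := intPsi lam (Psi_of sem pat)))
  => [|A /mAs mA]; first exact: equivFin_word_null.
by exists (fun a => Rintegral lam A (sem a)); exact: intPsi_Psi_of.
Qed.
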